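(* Let $t:\Sigma^*\to\Omega^*$ be a rational partial function with suffix-closed domain. If $X\subseteq\mathrm{dom}(t)$ is a context-free language and $t(X)$ has exponential growth, then $X$ has exponential $t$-growth and exponential $\overleftarrow{t}$-growth.
   Context: A partial function is rational if its graph is a rational subset of $\Sigma^*\times\Omega^*$. Suffix-closed: closed under taking suffixes. The suffix expansion $\overleftarrow{t}$ maps $a_1\cdots a_n\in\mathrm{dom}(t)$ to the sequence $(t(a_1\cdots a_n),t(a_2\cdots a_n),\dots,t(a_n))$. For a partial function $f$ and $X\subseteq\mathrm{dom}(f)$, the $f$-growth of $X$ is $n\mapsto|f(X\cap\Sigma^{\le n})|$; the growth of a language $Y\subseteq\Omega^*$ is $n\mapsto|Y\cap\Omega^{\le n}|$. A function $\gamma$ grows exponentially if there is $c>1$ with $\gamma(n)\ge c^n$ for infinitely many $n$. *)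

From mathcomp Require Import all_boot.
From Stdlib Require Import Reals ClassicalEpsilon.
Set Implicit Arguments. Unset Strict Implicit. Unset Printing Implicit Defensive.

Section Rational.
Variables (Sigma Omega : finType).

Inductive ratexp :=
  | RNone
  | RAtom of seq Sigma & seq Omega
  | RUnion of ratexp & ratexp
  | RCat of ratexp & ratexp
  | RStar of ratexp.

Inductive rsem : ratexp -> seq Sigma -> seq Omega -> Prop :=
  | rsem_atom u v : rsem (RAtom u v) u v
  | rsem_unionl e f u v : rsem e u v -> rsem (RUnion e f) u v
  | rsem_unionr e f u v : rsem f u v -> rsem (RUnion e f) u v
  | rsem_cat e f u1 v1 u2 v2 : rsem e u1 v1 -> rsem f u2 v2 ->
      rsem (RCat e f) (u1 ++ u2) (v1 ++ v2)
  | rsem_star_nil e : rsem (RStar e) [::] [::]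
  | rsem_star_cons e u1 v1 u2 v2 : rsem e u1 v1 -> rsem (RStar e) u2 v2 ->
      rsem (RStar e) (u1 ++ u2) (v1 ++ v2).

Definition rational_fun (t : seq Sigma -> option (seq Omega)) : Prop :=
  exists e : ratexp, forall u v, t u = Some v <-> rsem e u v.

End Rational.

Definition in_dom (A B : Type) (t : seq A -> option B) (u : seq A) : Prop :=
  t u <> None.

Definition suffix_closed_dom (A B : Type) (t : seq A -> option B) : Prop :=
  forall u v : seq A, in_dom t (u ++ v) -> in_dom t v.

(* suffix expansion: a1..an |-> (t(a1..an), t(a2..an), ..., t(an)) on dom t.
   (On a suffix-closed domain every entry is defined; odflt is never used there.) *)
Definition suffix_expansion (A B : Type) (t : seq A -> option (seq B))
  (w : seq A) : option (seq (seq B)) :=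
  if t w is Some _ then
    Some (map (fun k => odflt [::] (t (drop k w))) (iota 0 (size w)))
  else None.

Section CFG.
Variable (Sigma : finType).

Inductive derives (k : nat) (P : seq ('I_k * seq ('I_k + Sigma)%type))
  : seq ('I_k + Sigma)%type -> seq Sigma -> Prop :=
  | der_nil : derives P [::] [::]
  | der_term a s w : derives P s w -> derives P (inr a :: s) (a :: w)
  | der_nonterm A rhs s w1 w2 : (A, rhs) \in P -> derives P rhs w1 ->
      derives P s w2 -> derives P (inl A :: s) (w1 ++ w2).

Definition context_free (X : pred (seq Sigma)) : Prop :=
  exists (k : nat) (S : 'I_k) (P : seq ('I_k * seq ('I_k + Sigma)%type)),
    forall w, X w <-> derives P [:: inl S] w.

End CFG.

Definition words_upto (A : finType) (n : nat) : seq (seq A) :=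
  flatten (map (fun k => map (@tval k A) (enum {: k.-tuple A})) (iota 0 n.+1)).

Definition pb (P : Prop) : bool :=
  if excluded_middle_informative P then true else false.

Definition fgrowth (A : finType) (B : eqType) (f : seq A -> option B)
  (X : pred (seq A)) (n : nat) : nat :=
  size (undup (pmap f (filter X (words_upto A n)))).

Definition lang_growth (B : finType) (Y : seq B -> Prop) (n : nat) : nat :=
  count (fun v => pb (Y v)) (words_upto B n).

Definition image_lang (A B : Type) (f : seq A -> option B) (X : pred (seq A)) : B -> Prop :=
  fun v => exists u, X u /\ f u = Some v.

Definition grows_exponentially (g : nat -> nat) : Prop :=
  exists c : R, (1 < c)%R /\
    forall N : nat, exists n : nat, (N <= n)%N /\ (c ^ n <= INR (g n))%R.

(* A rational function is computed by a finite transducer with epsilon-moves.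
   Pair a derivation tree of the grammar of X with a run of the transducer on the
   derived word: each nonterminal node gets a label (X, p, r) -- its nonterminal
   and the states entering and leaving its subword -- and an output factor.  When
   a node has a descendant with the same label and the same output factor, the
   descendant's subtree can replace the node's.  After all such replacements,
   subtrees with empty output have bounded size, and a chain of nested nodes
   sharing one output factor has at most as many links as there are labels;
   nodes splitting their output into two nonempty factors are few, and the
   input length of the tree becomes linear in the length of its output.  So
   every v in t(X) has a preimage in X of length O(|v|), and t(X) having
   exponential growth forces X to have exponential t-growth.  The first entry
   of the suffix expansion is t itself, so the suffix expansion separates at
   least as many words as t does. *)

From mathcomp Require Import all_boot zify.
From Stdlib Require ClassicalEpsilon.
Set Implicit Arguments. Unset Strict Implicit. Unset Printing Implicit Defensive.

Section Transducers.
Variables Sigma Omega : finType.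

Definition ocons (a : option Sigma) (u : seq Sigma) : seq Sigma :=
  if a is Some x then x :: u else u.

Lemma ocons_cat a u1 u2 : ocons a (u1 ++ u2) = ocons a u1 ++ u2.
Proof. by case: a. Qed.

Section Runs.
Variables (Q : Type) (step : Q -> option Sigma -> seq Omega -> Q -> Prop).

Inductive run : Q -> seq Sigma -> seq Omega -> Q -> Prop :=
| run_nil p : run p [::] [::] p
| run_cons p a w q u v r : step p a w q -> run q u v r -> run p (ocons a u) (w ++ v) r.

Lemma run_step p a w q : step p a w q -> run p (ocons a [::]) w q.
Proof. by move=> st; rewrite -[w]cats0; apply: run_cons st (run_nil q). Qed.

Lemma run_cat p u1 v1 q u2 v2 r :
  run p u1 v1 q -> run q u2 v2 r -> run p (u1 ++ u2) (v1 ++ v2) r.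
Proof.
elim=> // {}p a w {}q u v r' st _ IH /IH run_rest.
by rewrite -ocons_cat -catA; apply: run_cons st run_rest.
Qed.

Lemma run_split p u1 u2 v r : run p (u1 ++ u2) v r ->
  exists q v1 v2, [/\ v = v1 ++ v2, run p u1 v1 q & run q u2 v2 r].
Proof.
move Eu: (u1 ++ u2) => u H; elim: H u1 Eu => [{}p|{}p a w q u' v' r' st rn IH] u1 Eu.
  by case: u1 Eu => // /= ->; exists p, [::], [::]; split=> //; apply: run_nil.
case: a st Eu => [x|] st; last first.
  move=> /IH [q' [v1 [v2 [-> run1 run2]]]].
  exists q', (w ++ v1), v2; rewrite catA; split=> //.
  exact: (run_cons (a := None)) st run1.
case: u1 => [|y u1] /= Eu.
  exists p, [::], (w ++ v'); split=> //; first exact: run_nil.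
  by rewrite Eu; apply: (run_cons (a := Some x)) st rn.
case: Eu => -> /IH [q' [v1 [v2 [-> run1 run2]]]].
exists q', (w ++ v1), v2; rewrite catA; split=> //.
exact: (run_cons (a := Some x)) st run1.
Qed.

Lemma run_stuck p u v q : (forall a w r, ~ step p a w r) -> run p u v q ->
  [/\ u = [::], v = [::] & q = p].
Proof. by move=> stuck H; case: H stuck => [//|p' a w r u' v' q' st _ /(_ a w r)]. Qed.

Lemma run_first p u v q : p <> q -> run p u v q ->
  exists a w r u' v', [/\ step p a w r, run r u' v' q, u = ocons a u' & v = w ++ v'].
Proof.
move=> neq_pq H; case: H neq_pq => [//|{}p a w r u' v' q' st rn _].
by exists a, w, r, u', v'.
Qed.

End Runs.

Lemma run_map (Q Q' : Type) (step : Q -> _) (step' : Q' -> _) (f : Q -> Q') p u v q :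
  (forall p a w q, step p a w q -> step' (f p) a w (f q)) ->
  run step p u v q -> run step' (f p) u v (f q).
Proof.
move=> f_step; elim=> [{}p|{}p a w r u' v' q' /f_step st _ IH]; first exact: run_nil.
exact: run_cons st IH.
Qed.

Record transducer := Transducer {
  state : finType;
  trans : state -> option Sigma -> seq Omega -> state -> Prop;
  start : state;
  final : state }.

Definition accepts (A : transducer) u v := run (@trans A) (start A) u v (final A).

Definition tr_empty : transducer := @Transducer bool (fun _ _ _ _ => False) false true.

Lemma accepts_tr_empty u v : ~ accepts tr_empty u v.
Proof. by case/(run_stuck (fun _ _ _ => id)). Qed.

Definition tr_step (oa : option Sigma) (w0 : seq Omega) : transducer :=
  @Transducer bool (fun p a w q => [/\ p = false, q = true, a = oa & w = w0]) false true.

Lemma accepts_tr_step oa w0 u v :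
  accepts (tr_step oa w0) u v <-> u = ocons oa [::] /\ v = w0.
Proof.
split; last by case=> -> ->; apply: run_step.
case/(run_first (@Bool.diff_false_true))=> a [w [r [u' [v' [[_ -> -> ->]]]]]].
have stuck_true a' w' r' : ~ @trans (tr_step oa w0) true a' w' r' by case.
by case/(run_stuck stuck_true)=> -> -> _; rewrite cats0.
Qed.

Definition cat_trans (A B : transducer) (p : state A + state B) a w
    (q : state A + state B) : Prop :=
  match p, q with
  | inl x, inl y | inr x, inr y => trans x a w y
  | inl x, inr y => [/\ x = final A, y = start B, a = None & w = [::]]
  | inr _, inl _ => False
  end.

Definition tr_cat (A B : transducer) : transducer :=
  @Transducer (state A + state B)%type (@cat_trans A B) (inl (start A)) (inr (final B)).

Lemma accepts_tr_cat A B u v : accepts (tr_cat A B) u v <->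
  exists u1 v1 u2 v2, [/\ u = u1 ++ u2, v = v1 ++ v2, accepts A u1 v1 & accepts B u2 v2].
Proof.
split; last first.
  case=> u1 [v1] [u2] [v2] [-> -> runA runB].
  apply: run_cat (run_map (f := inl) _ runA) _ => //.
  rewrite -[u2]/(ocons None u2) -[v2]/([::] ++ v2).
  by apply: run_cons (run_map (f := inr) _ runB).
have inv p u' v' y : run (@cat_trans A B) p u' v' (inr y) ->
  match p with
  | inl x => exists u1 v1 u2 v2, [/\ u' = u1 ++ u2, v' = v1 ++ v2,
      run (@trans A) x u1 v1 (final A) & run (@trans B) (start B) u2 v2 y]
  | inr x => run (@trans B) x u' v' y
  end.
  move Eq: (inr y) => q H; elim: H Eq => [p' <-|p' a w q' u'' v'' r st _ IH Eq].
    exact: run_nil.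
  move: {IH Eq}(IH Eq).
  case: p' q' st => [x|x] [x'|x'] //= st.
  - case=> u1 [v1] [u2] [v2] [-> -> run1 run2].
    exists (ocons a u1), (w ++ v1), u2, v2; rewrite ocons_cat catA.
    by split=> //; apply: run_cons st run1.
  - case: st => -> -> -> -> run2.
    by exists [::], [::], u'', v''; split=> //; apply: run_nil.
  - exact: run_cons st.
exact: inv.
Qed.

Definition union_trans (A B : transducer) (p : bool + (state A + state B)) a w
    (q : bool + (state A + state B)) : Prop :=
  match p, q with
  | inl false, inr (inl x) => [/\ x = start A, a = None & w = [::]]
  | inl false, inr (inr x) => [/\ x = start B, a = None & w = [::]]
  | inr (inl x), inl true => [/\ x = final A, a = None & w = [::]]
  | inr (inr x), inl true => [/\ x = final B, a = None & w = [::]]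
  | inr (inl x), inr (inl y) | inr (inr x), inr (inr y) => trans x a w y
  | _, _ => False
  end.

Definition tr_union (A B : transducer) : transducer :=
  @Transducer (bool + (state A + state B))%type (@union_trans A B) (inl false) (inl true).

Lemma accepts_tr_union A B u v :
  accepts (tr_union A B) u v <-> accepts A u v \/ accepts B u v.
Proof.
split; last first.
  rewrite /accepts => -[runA|runB]; rewrite -[u]cats0 -[v]cats0.
  - apply: (run_cons (a := None) (w := [::]) (q := inr (inl (start A)))) => //.
    by apply: run_cat (run_map (f := inr \o inl) _ runA) (run_step (a := None) _).
  - apply: (run_cons (a := None) (w := [::]) (q := inr (inr (start B)))) => //.
    by apply: run_cat (run_map (f := inr \o inr) _ runB) (run_step (a := None) _).
have inv p u' v' : run (@union_trans A B) p u' v' (inl true) ->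
  match p with
  | inl false => accepts A u' v' \/ accepts B u' v'
  | inl true => u' = [::] /\ v' = [::]
  | inr (inl x) => run (@trans A) x u' v' (final A)
  | inr (inr x) => run (@trans B) x u' v' (final B)
  end.
  move Eq: (inl true) => q H; elim: H Eq => [p' <-|p' a w q' u'' v'' r st _ IH Eq] //.
  move: {IH Eq}(IH Eq).
  case: p' q' st => [[]|[x|x]] [[]|[x'|x']] //= st.
  - by case: st => -> -> ->; left.
  - by case: st => -> -> ->; right.
  - by case: st => -> -> -> [-> ->]; apply: run_nil.
  - exact: run_cons st.
  - by case: st => -> -> -> [-> ->]; apply: run_nil.
  - exact: run_cons st.
exact: inv.
Qed.

Inductive kstar (L : seq Sigma -> seq Omega -> Prop) : seq Sigma -> seq Omega -> Prop :=
| kstar_nil : kstar L [::] [::]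
| kstar_cons u1 v1 u2 v2 : L u1 v1 -> kstar L u2 v2 -> kstar L (u1 ++ u2) (v1 ++ v2).

Definition star_trans (A : transducer) (p : option (state A)) a w (q : option (state A)) :=
  match p, q with
  | None, Some x => [/\ x = start A, a = None & w = [::]]
  | Some x, None => [/\ x = final A, a = None & w = [::]]
  | Some x, Some y => trans x a w y
  | None, None => False
  end.

Definition tr_star (A : transducer) : transducer :=
  @Transducer (option (state A)) (@star_trans A) None None.

Lemma accepts_tr_star A u v : accepts (tr_star A) u v <-> kstar (accepts A) u v.
Proof.
split; last first.
  elim=> [|u1 v1 u2 v2 runA _ IH]; first exact: run_nil.
  apply: (run_cons (a := None) (w := [::]) (q := Some (start A))) => //.
  apply: run_cat (run_map (f := Some) _ runA) _ => //.
  exact: (run_cons (a := None) (w := [::]) (q := None)).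
have inv p u' v' : run (@star_trans A) p u' v' None ->
  match p with
  | None => kstar (accepts A) u' v'
  | Some x => exists u1 v1 u2 v2, [/\ u' = u1 ++ u2, v' = v1 ++ v2,
      run (@trans A) x u1 v1 (final A) & kstar (accepts A) u2 v2]
  end.
  move Eq: None => q H; elim: H Eq => [p' <-|p' a w q' u'' v'' r st _ IH Eq].
    exact: kstar_nil.
  move: {IH Eq}(IH Eq); case: p' q' st => [x|] [x'|] //= st.
  - case=> u1 [v1] [u2] [v2] [-> -> run1 star2].
    exists (ocons a u1), (w ++ v1), u2, v2; rewrite ocons_cat catA.
    by split=> //; apply: run_cons st run1.
  - case: st => -> -> -> star2.
    by exists [::], [::], u'', v''; split=> //; apply: run_nil.
  - case: st => -> -> -> [u1 [v1 [u2 [v2 [-> -> run1 star2]]]]].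
    exact: kstar_cons run1 star2.
exact: inv.
Qed.

Fixpoint tr_word (u : seq Sigma) (v : seq Omega) : transducer :=
  if u is a :: u' then tr_cat (tr_step (Some a) [::]) (tr_word u' v) else tr_step None v.

Lemma accepts_tr_word u v u' v' : accepts (tr_word u v) u' v' <-> u' = u /\ v' = v.
Proof.
elim: u u' v' => [|a u IH] u' v' /=; first exact: accepts_tr_step.
rewrite accepts_tr_cat; split.
  by case=> u1 [v1] [u2] [v2] [-> -> /accepts_tr_step[-> ->] /IH[-> ->]].
case=> -> ->; exists [:: a], [::], u, v.
by split; [| |apply/accepts_tr_step|apply/IH].
Qed.

Fixpoint tr_of_ratexp (e : ratexp Sigma Omega) : transducer :=
  match e with
  | RNone => tr_empty
  | RAtom u v => tr_word u v
  | RUnion e f => tr_union (tr_of_ratexp e) (tr_of_ratexp f)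
  | RCat e f => tr_cat (tr_of_ratexp e) (tr_of_ratexp f)
  | RStar e => tr_star (tr_of_ratexp e)
  end.

Lemma accepts_tr_of_ratexp e u v : accepts (tr_of_ratexp e) u v <-> rsem e u v.
Proof.
split.
  elim: e u v => [|u0 v0|e IHe f IHf|e IHe f IHf|e IHe] u v /=.
  - by move/accepts_tr_empty.
  - by case/accepts_tr_word=> -> ->; apply: rsem_atom.
  - by case/accepts_tr_union=> [/IHe|/IHf]; [apply: rsem_unionl|apply: rsem_unionr].
  - by case/accepts_tr_cat=> u1 [v1] [u2] [v2] [-> -> /IHe ? /IHf ?]; apply: rsem_cat.
  - move/accepts_tr_star; elim=> [|u1 v1 u2 v2 /IHe ? _ ?]; first exact: rsem_star_nil.
    exact: rsem_star_cons.
elim=> {e u v} /=.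
- by move=> u v; apply/accepts_tr_word.
- by move=> e f u v _ ?; apply/accepts_tr_union; left.
- by move=> e f u v _ ?; apply/accepts_tr_union; right.
- by move=> e f u1 v1 u2 v2 _ ? _ ?; apply/accepts_tr_cat; exists u1, v1, u2, v2.
- by move=> e; apply/accepts_tr_star; apply: kstar_nil.
- move=> e u1 v1 u2 v2 _ ? _ /accepts_tr_star ?.
  by apply/accepts_tr_star; apply: kstar_cons.
Qed.

End Transducers.

Section Shrinking.
Variables (Sigma Omega : finType) (k : nat).
Variables (P : seq ('I_k * seq ('I_k + Sigma))) (A : transducer Sigma Omega).
Local Notation symbol := ('I_k + Sigma)%type.
Local Notation Q := (state A).
Local Notation step := (@trans _ _ A).
Local Notation triple := ('I_k * Q * Q)%type.

(* [aderiv ok p s q w v]: a derivation of [w] from [s] together with a run of [A]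
   from [p] to [q] reading [w] with output [v], split along the derivation tree;
   every nonterminal node [X] read from [p] to [r] with output [v1] satisfies
   [ok X p r v1]. *)
Inductive aderiv (ok : 'I_k -> Q -> Q -> seq Omega -> Prop) :
    Q -> seq symbol -> Q -> seq Sigma -> seq Omega -> Prop :=
| aderiv_nil p q v : run step p [::] v q -> aderiv ok p [::] q [::] v
| aderiv_term p r q a v1 s w v2 : run step p [:: a] v1 r -> aderiv ok r s q w v2 ->
    aderiv ok p (inr a :: s) q (a :: w) (v1 ++ v2)
| aderiv_nt p r q X rhs s w1 w2 v1 v2 : (X, rhs) \in P -> ok X p r v1 ->
    aderiv ok p rhs r w1 v1 -> aderiv ok r s q w2 v2 ->
    aderiv ok p (inl X :: s) q (w1 ++ w2) (v1 ++ v2).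

Definition unrestricted (X : 'I_k) (p r : Q) (v : seq Omega) := True.

Definition avoiding (S : {set triple}) (v0 : seq Omega) X p r (v : seq Omega) :=
  v = v0 -> (X, p, r) \in S.

Lemma aderiv_mono ok ok' p s q w v : (forall X p r v, ok X p r v -> ok' X p r v) ->
  aderiv ok p s q w v -> aderiv ok' p s q w v.
Proof.
move=> ok_ok'; elim=> {p s q w v} [p q v rn|p r q a v1 s w v2 rn _ d|].
- exact: aderiv_nil.
- exact: aderiv_term rn d.
- move=> p r q X rhs s w1 w2 v1 v2 rhsP /ok_ok' okX _ d1 _ d2.
  exact: aderiv_nt rhsP okX d1 d2.
Qed.

Lemma aderiv_unrestricted ok p s q w v :
  aderiv ok p s q w v -> aderiv unrestricted p s q w v.
Proof. exact: aderiv_mono. Qed.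

Lemma aderiv_setT v0 ok p s q w v :
  aderiv ok p s q w v -> aderiv (avoiding setT v0) p s q w v.
Proof. by apply: aderiv_mono => *; rewrite /avoiding in_setT. Qed.

Lemma aderiv_sound ok p s q w v :
  aderiv ok p s q w v -> derives P s w /\ run step p w v q.
Proof.
elim=> {p s q w v} [p q v rn|p r q a v1 s w v2 rn _ [ds rs]|].
- by split=> //; apply: der_nil.
- by split; [apply: der_term|rewrite -cat1s; apply: run_cat rn rs].
- move=> p r q X rhs s w1 w2 v1 v2 rhsP _ _ [d1 r1] _ [d2 r2].
  by split; [apply: der_nonterm rhsP d1 d2|apply: run_cat r1 r2].
Qed.

Lemma aderiv_complete s w : derives P s w ->
  forall p v q, run step p w v q -> aderiv unrestricted p s q w v.
Proof.
elim=> {s w} [|a s w _ IH|X rhs s w1 w2 rhsP _ IH1 _ IH2] p v q.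
- exact: aderiv_nil.
- move=> rn; have [r [v1 [v2 [-> r1 r2]]]] := run_split (u1 := [:: a]) rn.
  exact: aderiv_term r1 (IH _ _ _ r2).
- move=> rn; have [r [v1 [v2 [-> r1 r2]]]] := run_split rn.
  exact: aderiv_nt rhsP _ (IH1 _ _ _ r1) (IH2 _ _ _ r2).
Qed.

(* The second alternative is read off a lowest node labelled [(X0, p0, q0)] with
   output [v0]. *)
Lemma aderiv_setD1 S v0 X0 p0 q0 p s q w u :
  aderiv (avoiding S v0) p s q w u ->
  aderiv (avoiding (S :\ (X0, p0, q0)) v0) p s q w u \/
  exists rhs w', (X0, rhs) \in P /\
    aderiv (avoiding (S :\ (X0, p0, q0)) v0) p0 rhs q0 w' v0.
Proof.
elim=> {p s q w u} [p q v rn|p r q a v1 s w v2 rn _ [d|?]|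
  p r q X rhs s w1 w2 v1 v2 rhsP okX _ [d1|?] _ [d2|?]]; try by right.
- by left; apply: aderiv_nil.
- by left; apply: aderiv_term rn d.
case: (boolP ((v1 == v0) && ((X, p, r) == (X0, p0, q0)))).
  by case/andP=> /eqP Ev /eqP[EX Ep Er]; right; subst; exists rhs, w1.
move=> neq; left; apply: aderiv_nt rhsP _ d1 d2 => Ev1.
by rewrite in_setD1 (okX Ev1) andbT; move: neq; rewrite Ev1 eqxx.
Qed.

Lemma aderiv_node_setD1 S v0 X p r rhs w : (X, rhs) \in P ->
  aderiv (avoiding S v0) p rhs r w v0 ->
  exists rhs' w', (X, rhs') \in P /\ aderiv (avoiding (S :\ (X, p, r)) v0) p rhs' r w' v0.
Proof. by move=> rhsP /(aderiv_setD1 X p r) [d|//]; exists rhs, w. Qed.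

Definition rmax := \max_(r <- P) size r.2.

Lemma size_rhs X rhs : (X, rhs) \in P -> size rhs <= rmax.
Proof. by move=> rhsP; apply: (leq_bigmax_seq (F := fun r => size r.2)) rhsP _. Qed.

Definition node_shrink ok (v : seq Omega) (d n : nat) :=
  forall X p r rhs w, (X, rhs) \in P -> ok X p r v -> aderiv ok p rhs r w v ->
  exists rhs' w', [/\ (X, rhs') \in P, aderiv unrestricted p rhs' r w' v & size w' + d <= n].

Lemma node_shrink_le ok v d n d' n' : (forall x, x + d <= n -> x + d' <= n') ->
  node_shrink ok v d n -> node_shrink ok v d' n'.
Proof.
move=> le_dn shrink X p r rhs w rhsP okX.
by case/(shrink _ _ _ _ _ rhsP okX)=> rhs' [w' [? ? /le_dn ?]]; exists rhs', w'.
Qed.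

Lemma node_shrink_setT v d n :
  node_shrink (avoiding setT v) v d n -> node_shrink unrestricted v d n.
Proof.
move=> shrink X p r rhs w rhsP _ /(aderiv_setT v).
by apply: shrink rhsP _; rewrite /avoiding in_setT.
Qed.

Lemma aderiv_eps_form S c p s q w u : node_shrink (avoiding S [::]) [::] 0 c ->
  aderiv (avoiding S [::]) p s q w u -> u = [::] ->
  exists w', aderiv unrestricted p s q w' [::] /\ size w' <= size s * c.+1.
Proof.
move=> shrink; elim=> {p s q w u} [p q v rn Ev|p r q a v1 s w v2 rn _ IH|].
- by exists [::]; split=> //; rewrite -Ev; apply: aderiv_nil.
- case: v1 rn => // rn /IH[w' [d' le_w']].
  exists (a :: w'); split; first exact: aderiv_term rn d'.
  by rewrite /= mulSn; lia.
move=> p r q X rhs s w1 w2 v1 v2 rhsP okX d1 _ _ IH.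
case: v1 okX d1 => // okX d1 /IH[w2' [d2' le_w2']].
have [rhs' [w1' [rhsP' d1' le_w1']]] := shrink _ _ _ _ _ rhsP okX d1.
exists (w1' ++ w2'); split; first exact: aderiv_nt rhsP' _ d1' d2'.
by rewrite size_cat /= mulSn; lia.
Qed.

Definition eps_bound m := iter m (fun c => (rmax * c).+1) 1.

Lemma aderiv_eps_card m (S : {set triple}) p s q w : #|S| <= m ->
  aderiv (avoiding S [::]) p s q w [::] ->
  exists w', aderiv unrestricted p s q w' [::] /\ size w' <= size s * eps_bound m.
Proof.
elim: m S p s q w => [|m IHm] S p s q w le_S_m d.
  apply: (aderiv_eps_form (c := 0)) d erefl => X p' r rhs w' _ /(_ erefl) XS.
  by move: le_S_m; rewrite leqn0 => /eqP/cards0_eq S0; rewrite S0 inE in XS.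
apply: (aderiv_eps_form (c := rmax * eps_bound m)) d erefl.
move=> X p' r rhs w' rhsP /(_ erefl) XS d'.
have [rhs1 [w1 [rhsP1 d1]]] := aderiv_node_setD1 rhsP d'.
have le_S'_m : #|S :\ (X, p', r)| <= m by move: le_S_m; rewrite (cardsD1 (X, p', r)) XS.
have [w1' [d1' le_w1']] := IHm _ _ _ _ _ le_S'_m d1.
exists rhs1, w1'; split=> //; rewrite addn0 (leq_trans le_w1') // leq_mul2r.
by rewrite (size_rhs rhsP1) orbT.
Qed.

Definition eps_cost := eps_bound #|{: triple}|.

Lemma aderiv_eps_shrink ok p s q w : aderiv ok p s q w [::] ->
  exists w', aderiv unrestricted p s q w' [::] /\ size w' <= size s * eps_cost.
Proof. by move/(aderiv_setT [::]); apply: aderiv_eps_card; apply: max_card. Qed.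

Lemma eps_cost_gt0 : 0 < eps_cost.
Proof. by rewrite /eps_cost /eps_bound; case: #|_|. Qed.

Definition sym_cost := rmax.+1 * eps_cost.
Definition rhs_cost := rmax * sym_cost.
Definition chain_cost := #|{: triple}| * rhs_cost.
(* A node whose output is split among at least two shorter children is paid for
   by their savings of [chain_cost] each. *)
Definition slope := chain_cost.*2.

Lemma eps_le_sym_cost n : n * eps_cost <= sym_cost * n.
Proof. by rewrite mulnC leq_mul2r leq_pmull ?orbT. Qed.

Lemma sym_cost_gt0 : 0 < sym_cost.
Proof. by rewrite muln_gt0 eps_cost_gt0. Qed.

Lemma rhs_eps_cost X (rhs : seq symbol) :
  (X, rhs) \in P -> size rhs * eps_cost <= sym_cost.
Proof. by move=> rhsP; rewrite leq_mul2r leqW ?(size_rhs rhsP) ?orbT. Qed.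

Lemma rhs_sym_cost X (rhs : seq symbol) :
  (X, rhs) \in P -> sym_cost * size rhs <= rhs_cost.
Proof. by move=> rhsP; rewrite mulnC leq_mul2r (size_rhs rhsP) orbT. Qed.

(* Invariant of a sentential form with output [u], a suffix of a node output [v]:
   either one of its nonterminals carries all of [v], and [cS] pays for the chain
   of nodes below it, or [a] of its nonterminals carry nonempty outputs shorter
   than [v], of total length [m]. *)
Definition chain_bound (v : seq Omega) cS n (u : seq Omega) len :=
  (size u = size v /\ len + slope <= sym_cost * n + cS + slope * size v) \/
  exists a m, [/\ m <= size u, m <= a * (size v).-1
                & len + a * chain_cost <= sym_cost * n + slope * m].

Lemma chain_bound_cons v cS n (pre v1 : seq Omega) u len len' :
  size pre + size v1 + size u = size v -> len' <= sym_cost + len ->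
  chain_bound v cS n u len -> chain_bound v cS n.+1 (v1 ++ u) len'.
Proof.
move=> size_v le_len [[Eu le]|[a [m [le_m_u le_m_a le]]]]; [left|right].
  by rewrite size_cat mulnS; split; lia.
by exists a, m; rewrite size_cat mulnS; split; lia.
Qed.

Lemma aderiv_chain_form S v cS p s q w u pre :
  node_shrink (avoiding S v) v slope (cS + slope * size v) ->
  (forall v', 0 < size v' < size v ->
     node_shrink unrestricted v' chain_cost (slope * size v')) ->
  aderiv (avoiding S v) p s q w u -> pre ++ u = v ->
  exists w', aderiv unrestricted p s q w' u /\ chain_bound v cS (size s) u (size w').
Proof.
move=> chain strict d; elim: d pre => {p s q w u} [p q u rn|p r q a v1 s w v2 rn _ IH|
  p r q X rhs s w1 w2 v1 v2 rhsP okX d1 _ d2 IH] pre Epre.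
- by exists [::]; split; [apply: aderiv_nil|right; exists 0, 0].
- move: (Epre); rewrite catA => /IH[w' [d' bound]].
  exists (a :: w'); split; first exact: aderiv_term rn d'.
  apply: chain_bound_cons bound; first by rewrite -Epre !size_cat addnA.
  by rewrite /= -add1n leq_add2r sym_cost_gt0.
have size_v : size pre + size v1 + size v2 = size v by rewrite -Epre !size_cat addnA.
have [v1_nil|v1_cons] := eqVneq v1 [::].
  subst v1; have [w1' [d1' le_w1']] := aderiv_eps_shrink d1.
  move: (Epre); rewrite catA => /IH[w2' [d2' bound]].
  exists (w1' ++ w2'); split; first exact: aderiv_nt rhsP _ d1' d2'.
  apply: chain_bound_cons size_v _ bound; rewrite size_cat leq_add2r.
  exact: leq_trans le_w1' (rhs_eps_cost rhsP).
have [v1_v|v1_neq] := eqVneq v1 v.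
  have v2_nil : v2 = [::] by apply: size0nil; move: size_v; rewrite v1_v; lia.
  subst v1 v2; have [rhs' [w1' [rhsP' d1' le_w1']]] := chain _ _ _ _ _ rhsP okX d1.
  have [w2' [d2' le_w2']] := aderiv_eps_shrink d2.
  exists (w1' ++ w2'); split; first exact: aderiv_nt rhsP' _ d1' d2'.
  left; rewrite cats0 size_cat /= mulnS; split=> //.
  by move: (eps_le_sym_cost (size s)); lia.
have v1_range : 0 < size v1 < size v.
  rewrite lt0n size_eq0 v1_cons ltnNge /=; apply: contra_neqN v1_neq => le_v_v1.
  have [/size0nil Ep /size0nil Ev2] : size pre = 0 /\ size v2 = 0 by lia.
  by rewrite -Epre Ep Ev2 cats0.
have [rhs' [w1' [rhsP' d1' le_w1']]] :=
  strict v1 v1_range _ _ _ _ _ rhsP I (aderiv_unrestricted d1).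
case/andP: v1_range => v1_gt0 lt_v1.
move: (Epre); rewrite catA => /IH[w2' [d2' [[Ev2 _]|[a [m [le_m le_ma le_w2']]]]]].
  by move: size_v; lia.
exists (w1' ++ w2'); split; first exact: aderiv_nt rhsP' _ d1' d2'.
right; exists a.+1, (size v1 + m); rewrite !size_cat /= !mulSn mulnS mulnDr.
by split; lia.
Qed.

(* Induction on [size v], then on [S]: following a chain of nodes with output [v]
   removes the label of each link from [S]. *)
Lemma node_shrink_avoiding v (S : {set triple}) : 0 < size v ->
  node_shrink (avoiding S v) v slope (#|S| * rhs_cost + slope * size v).
Proof.
have [n] := ubnP (size v); elim: n v S => // n IHn v S /ltnSE le_v_n v_gt0.
have strict v' : 0 < size v' < size v ->
    node_shrink unrestricted v' chain_cost (slope * size v').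
  case/andP=> v'_gt0 lt_v'_v; apply/node_shrink_setT.
  apply: node_shrink_le (IHn v' setT (leq_trans lt_v'_v le_v_n) v'_gt0) => x.
  by rewrite cardsT /slope -/chain_cost; lia.
have [m] := ubnP #|S|; elim: m S => // m IHm S /ltnSE le_S_m.
move=> X p q rhs w rhsP /(_ erefl) XS d.
have [rhs1 [w1 [rhsP1 d1]]] := aderiv_node_setD1 rhsP d.
have card_S : #|S| = #|S :\ (X, p, q)|.+1 by rewrite (cardsD1 (X, p, q)) XS.
have lt_S'_m : #|S :\ (X, p, q)| < m by rewrite -ltnS -card_S.
have [w' [d' bound]] := aderiv_chain_form (IHm _ lt_S'_m) strict d1 (cat0s v).
exists rhs1, w'; split=> //.
move: (rhs_sym_cost rhsP1); rewrite card_S mulSn.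
case: bound => [[_ le_w']|[a [m' [le_m' le_m'a le_w']]]]; first lia.
have slope_m' := leq_mul (leqnn slope) le_m'.
have slope_v : slope <= slope * size v by rewrite leq_pmulr.
case: a le_m'a le_w' => [|[|a]] le_m'a le_w'.
- by rewrite leqn0 in le_m'a; move: le_m'a le_w' => /eqP->; lia.
- have le_m'_v : m'.+1 <= size v by move: le_m'a v_gt0; rewrite mul1n; lia.
  by move: (leq_mul (leqnn slope) le_m'_v); rewrite mulnS; lia.
- have slope2 : slope = chain_cost + chain_cost by rewrite addnn.
  by rewrite !mulSn in le_w'; lia.
Qed.

Definition lin_cost := sym_cost + slope.

Lemma aderiv_shrink p s q w v : aderiv unrestricted p s q w v ->
  exists w', aderiv unrestricted p s q w' v /\ size w' <= lin_cost * (size s + size v).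
Proof.
elim=> {p s q w v} [p q v rn|p r q a v1 s w v2 rn _ [w' [d' le_w']]|
  p r q X rhs s w1 w2 v1 v2 rhsP _ d1 _ _ [w2' [d2' le_w2']]].
- by exists [::]; split=> //; apply: aderiv_nil.
- exists (a :: w'); split; first exact: aderiv_term rn d'.
  have lin_gt0 : 0 < lin_cost by rewrite ltn_addr ?sym_cost_gt0.
  by rewrite mulnDr in le_w'; rewrite size_cat /= addSn mulnS !mulnDr; lia.
have [rhs' [w1' [rhsP' d1' le_w1']]] : exists rhs' w1', [/\ (X, rhs') \in P,
    aderiv unrestricted p rhs' r w1' v1 & size w1' <= lin_cost * (size v1).+1].
  have [v1_nil|v1_cons] := eqVneq v1 [::].
    subst v1; have [w1' [d1' le_w1']] := aderiv_eps_shrink d1.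
    exists rhs, w1'; split=> //; rewrite muln1 (leq_trans le_w1') //.
    exact: leq_trans (rhs_eps_cost rhsP) (leq_addr _ _).
  have v1_gt0 : 0 < size v1 by rewrite lt0n size_eq0.
  have [rhs' [w1' [? ? le_w1']]] :=
    node_shrink_setT (node_shrink_avoiding (S := setT) v1_gt0) rhsP I d1.
  exists rhs', w1'; split=> //; move: le_w1'; rewrite cardsT -/chain_cost mulnS.
  have slope_v1 : slope * size v1 <= lin_cost * size v1 by rewrite leq_mul2r leq_addl orbT.
  have slope2 : slope = chain_cost + chain_cost by rewrite addnn.
  by rewrite /lin_cost in slope_v1 *; lia.
exists (w1' ++ w2'); split; first exact: aderiv_nt rhsP' _ d1' d2'.
rewrite size_cat; apply: leq_trans (leq_add le_w1' le_w2') _.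
by rewrite -mulnDr leq_mul2l size_cat /=; apply/orP; right; lia.
Qed.

Lemma derives_run_shrink s p q u v : derives P s u -> run step p u v q ->
  exists u', [/\ derives P s u', run step p u' v q & size u' <= lin_cost * (size s + size v)].
Proof.
move=> ds rn; have [u' [d' le_u']] := aderiv_shrink (aderiv_complete ds rn).
by have [ds' rn'] := aderiv_sound d'; exists u'.
Qed.

End Shrinking.

Lemma rational_context_free_short_preimage (Sigma Omega : finType)
    (t : seq Sigma -> option (seq Omega)) (X : pred (seq Sigma)) :
  rational_fun t -> context_free X ->
  exists M, 0 < M /\ forall u v, X u -> t u = Some v ->
    exists u', [/\ X u', t u' = Some v & size u' <= M * (size v).+1].
Proof.
case=> e tE [k [S0 [P XE]]].
exists (lin_cost P (tr_of_ratexp e)).+1; split=> // u v /XE ds /tE/accepts_tr_of_ratexp rn.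
have [u' [/XE Xu' /accepts_tr_of_ratexp/tE tu' le_u']] := derives_run_shrink ds rn.
exists u'; split=> //; apply: leq_trans le_u' _.
by rewrite add1n leq_mul2r leqnSn orbT.
Qed.

Lemma mem_words_upto (A : finType) n w : (w \in words_upto A n) = (size w <= n).
Proof.
apply/flatten_mapP/idP => [[m]|le_w_n].
  by rewrite mem_iota ltnS => /andP[_ le_m_n] /mapP[x _ ->]; rewrite size_tuple.
exists (size w); first by rewrite mem_iota ltnS.
by apply/mapP; exists (Tuple (eqxx (size w))); rewrite ?mem_enum.
Qed.

Lemma uniq_words_upto (A : finType) n : uniq (words_upto A n).
Proof.
elim: n => [|n IH]; first by rewrite /words_upto /= cats0 (map_inj_uniq val_inj) enum_uniq.
rewrite /words_upto -addn1 iotaD map_cat flatten_cat /= cats0 -/(words_upto A n).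
rewrite cat_uniq IH (map_inj_uniq val_inj) enum_uniq andbT /=.
by apply/hasPn => _ /mapP[x _ ->]; rewrite mem_words_upto size_tuple ltnn.
Qed.

Lemma pbP (Q : Prop) : pb Q <-> Q.
Proof. by rewrite /pb; case: ClassicalEpsilon.excluded_middle_informative. Qed.

Lemma lang_growth_le_fgrowth (A B : finType) (t : seq A -> option (seq B)) (X : pred (seq A)) M :
  (forall u v, X u -> t u = Some v ->
     exists u', [/\ X u', t u' = Some v & size u' <= M * (size v).+1]) ->
  forall n, lang_growth (image_lang t X) n <= fgrowth t X (M * n.+1).
Proof.
move=> short n; rewrite /lang_growth /fgrowth -size_filter.
apply: uniq_leq_size; first by rewrite filter_uniq ?uniq_words_upto.
move=> v; rewrite mem_filter mem_words_upto => /andP[/pbP[u [Xu tu]] le_v_n].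
have [u' [Xu' tu' le_u']] := short _ _ Xu tu.
rewrite mem_undup mem_pmap; apply/mapP; exists u' => //.
by rewrite mem_filter Xu' mem_words_upto (leq_trans le_u') // leq_mul2l ltnS le_v_n orbT.
Qed.

Lemma fgrowth_omap_le (A : finType) (B C : eqType) (f : seq A -> option B) (h : B -> C)
    (X : pred (seq A)) n :
  fgrowth (fun u => omap h (f u)) X n <= fgrowth f X n.
Proof.
rewrite /fgrowth; set l := filter X _.
apply: leq_trans (_ : size (map h (undup (pmap f l))) <= _); last by rewrite size_map.
apply: uniq_leq_size; first exact: undup_uniq.
move=> c; rewrite mem_undup mem_pmap => /mapP[u ul].
case fu: (f u) => [b|] //= [->]; apply: map_f.
by rewrite mem_undup mem_pmap -fu map_f.
Qed.

(* The empty word expands to the empty sequence, hence the default of [head]. *)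
Lemma suffix_expansion_head (A B : Type) (t : seq A -> option (seq B)) u :
  t u = omap (head (odflt [::] (t [::]))) (suffix_expansion t u).
Proof.
rewrite /suffix_expansion; case: u => [|a u]; first by case: (t [::]).
by case E: (t (a :: u)) => //=; rewrite E.
Qed.

Lemma fgrowth_suffix_expansion (A B : finType) (t : seq A -> option (seq B))
    (X : pred (seq A)) n :
  fgrowth t X n <= fgrowth (suffix_expansion t) X n.
Proof.
by rewrite /fgrowth (eq_pmap (suffix_expansion_head t)); apply: fgrowth_omap_le.
Qed.

From Stdlib Require Import Reals Lra.

Lemma grows_exponentially_le f g :
  (forall n, f n <= g n) -> grows_exponentially f -> grows_exponentially g.
Proof.
move=> le_fg [c [c_gt1 big]]; exists c; split=> // N.
have [n [le_Nn le_cf]] := big N; exists n; split=> //.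
by apply: Rle_trans le_cf _; apply/le_INR/leP.
Qed.

Lemma grows_exponentially_dilate f g M : 0 < M ->
  (forall n, f n <= g (M * n.+1)) -> grows_exponentially f -> grows_exponentially g.
Proof.
move=> M_gt0 le_fg [c [c_gt1 big]].
have c_gt0 : (0 < c)%R by lra.
have M_pos : (0 < INR M)%R by apply/lt_0_INR/ltP.
exists (Rpower c (/ (2 * INR M))); split.
  rewrite -(Rpower_O c c_gt0); apply: Rpower_lt => //.
  by apply: Rinv_0_lt_compat; lra.
move=> N; have [n [lt_Nn le_cf]] := big N.+1.
exists (M * n.+1); split.
  exact: leq_trans (ltnW lt_Nn) (leq_trans (leqnSn n) (leq_pmull _ M_gt0)).
apply: Rle_trans (Rle_trans _ _ _ le_cf (le_INR _ _ (leP (le_fg n)))).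
rewrite -!Rpower_pow //; last exact: exp_pos.
rewrite Rpower_mult; apply: Rle_Rpower; first lra.
have n_ge1 : (1 <= INR n)%R by apply: (le_INR 1); apply/leP; rewrite (leq_trans _ lt_Nn).
rewrite (mult_INR M n.+1) S_INR; field_simplify; lra.
Qed.

Theorem proposition3 (Sigma Omega : finType)
  (t : seq Sigma -> option (seq Omega)) (X : pred (seq Sigma)) :
  rational_fun t ->
  suffix_closed_dom t ->
  (forall u, X u -> in_dom t u) ->
  context_free X ->
  grows_exponentially (lang_growth (image_lang t X)) ->
  grows_exponentially (fgrowth t X) /\
  grows_exponentially (fgrowth (suffix_expansion t) X).
Proof.
move=> t_rat _ _ X_cf t_exp.
have [M [M_gt0 short]] := rational_context_free_short_preimage t_rat X_cf.
have t_growth := grows_exponentially_dilate M_gt0 (lang_growth_le_fgrowth short) t_exp.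
split=> //; apply: grows_exponentially_le t_growth => n.
exact: fgrowth_suffix_expansion.
Qed.
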